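(* Let $(U_n)_{n\in\mathbb{Z}}$ be $2\times 2$ matrices with $U_n\in\mathcal{S}$ for all $n$, and let $N_0\ge 1$ be an integer with $U_n=I_2$ for all $|n|\ge N_0$. Let $\mathbb{S}_{\mathrm{QW}}=(s_{jk})_{j,k=1,2}$ be the scattering matrix of the associated quantum walk. For $j,k\in\{1,2\}$ let $G_{jk}$ be the set of finite walks $\gamma=(A_0,\dots,A_{L(\gamma)})$ on $\mathbb{Z}$ with $o(A_0)=(-1)^{k-1}N_0$ and $t(A_{L(\gamma)})=(-1)^jN_0$. Then $$ s_{jk}=(-1)^{j+k}\sum_{L=1}^{\infty}\ \sum_{\gamma\in G_{jk},\,L(\gamma)=L}\Phi(\gamma), $$ where for each positive integer $L$ the inner sum is a finite sum, and the series over $L$ converges absolutely.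
   Context: $\mathcal{S}:=\{M=(m_{jk})\in U(2): m_{11}=m_{22}\neq 0\}$. For each $n$ write $a_n,b_n,c_n$ for the $(1,1),(1,2),(2,1)$-entries of $U_n$, and set $P_n:=\begin{pmatrix}1&0\\0&0\end{pmatrix}U_n$, $Q_n:=\begin{pmatrix}0&0\\0&1\end{pmatrix}U_n$. The state space is $\mathcal{B}=\ell^\infty(\mathbb{Z};\mathbb{C}^2)$ of bounded sequences $\Psi=(\Psi(n))_{n\in\mathbb{Z}}$ of column vectors $\Psi(n)=(\Psi_1(n),\Psi_2(n))^T$, and the time evolution $\mathcal{U}:\mathcal{B}\to\mathcal{B}$ is $(\mathcal{U}\Psi)(n)=P_{n+1}\Psi(n+1)+Q_{n-1}\Psi(n-1)$. A state $\Psi$ is stationary if $\mathcal{U}\Psi=\Psi$; for every $n_1\in\mathbb{Z}$ and $v\in\mathbb{C}^2$ there is a unique stationary state with $\Psi(n_1)=v$. Let $\Psi_{\mathrm{in}}^\pm,\Psi_{\mathrm{out}}^\pm$ be the stationary states with $\Psi_{\mathrm{in}}^-(-N_0)=(0,1)^T$, $\Psi_{\mathrm{out}}^-(-N_0)=(1,0)^T$, $\Psi_{\mathrm{in}}^+(N_0)=(1,0)^T$, $\Psi_{\mathrm{out}}^+(N_0)=(0,1)^T$. The scattering matrix $\mathbb{S}_{\mathrm{QW}}$ is the $2\times2$ matrix with $(\Psi_{\mathrm{in}}^+,\Psi_{\mathrm{in}}^-)=(\Psi_{\mathrm{out}}^-,\Psi_{\mathrm{out}}^+)\,\mathbb{S}_{\mathrm{QW}}$.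 Regard $\mathbb{Z}$ as a directed graph with arcs $(n;R):=(n-1,n)$ and $(n;L):=(n+1,n)$, $n\in\mathbb{Z}$; for an arc $A=(u,v)$, $o(A)=u$ is its origin and $t(A)=v$ its terminus. A finite walk is a sequence of arcs $\gamma=(A_0,A_1,\dots,A_{L(\gamma)})$ with $o(A_l)=t(A_{l-1})$ for $1\le l\le L(\gamma)$; $L(\gamma)$ is its length. Its probability amplitude is $\Phi(\gamma):=\prod_{l=1}^{L(\gamma)}\Phi(A_{l-1},A_l)$, where, writing $m=o(A_l)$: $\Phi(A_{l-1},A_l)=a_m$ if $A_{l-1}=(m;L)$, $A_l=(m-1;L)$; $=b_m$ if $A_{l-1}=(m;R)$, $A_l=(m-1;L)$; $=c_m$ if $A_{l-1}=(m;L)$, $A_l=(m+1;R)$; $=a_m$ if $A_{l-1}=(m;R)$, $A_l=(m+1;R)$. *)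

From Stdlib Require Import Reals ZArith List.
From Coquelicot Require Export Coquelicot.
Import ListNotations.
Open Scope C_scope.

(* 2x2 complex matrices, entries indexed 1..2 (row, column);
   only indices in {1,2} are meaningful. *)
Definition mat2 := nat -> nat -> C.
Definition vec2 := (C * C)%type.

Definition inI2 (i : nat) : Prop := i = 1%nat \/ i = 2%nat.

Definition kron (i j : nat) : C := if Nat.eqb i j then 1 else 0.

Definition unitary2 (M : mat2) : Prop :=
  forall i j, inI2 i -> inI2 j ->
    M i 1%nat * Cconj (M j 1%nat) + M i 2%nat * Cconj (M j 2%nat) = kron i j.

Definition in_S (M : mat2) : Prop :=
  unitary2 M /\ M 1%nat 1%nat = M 2%nat 2%nat /\ M 1%nat 1%nat <> 0.

Definition is_id2 (M : mat2) : Prop :=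
  forall i j, inI2 i -> inI2 j -> M i j = kron i j.

Definition mulmv (M : mat2) (v : vec2) : vec2 :=
  (M 1%nat 1%nat * fst v + M 1%nat 2%nat * snd v,
   M 2%nat 1%nat * fst v + M 2%nat 2%nat * snd v).

Definition vadd (v w : vec2) : vec2 := (fst v + fst w, snd v + snd w).
Definition vscal (a : C) (v : vec2) : vec2 := (a * fst v, a * snd v).

Definition Pm (M : mat2) : mat2 := fun i j => if Nat.eqb i 1 then M i j else 0.
Definition Qm (M : mat2) : mat2 := fun i j => if Nat.eqb i 2 then M i j else 0.

Definition evol (U : Z -> mat2) (Psi : Z -> vec2) (n : Z) : vec2 :=
  vadd (mulmv (Pm (U (n + 1)%Z)) (Psi (n + 1)%Z))
       (mulmv (Qm (U (n - 1)%Z)) (Psi (n - 1)%Z)).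

Definition bounded_state (Psi : Z -> vec2) : Prop :=
  exists B : R, forall n, (Cmod (fst (Psi n)) <= B)%R /\ (Cmod (snd (Psi n)) <= B)%R.

Definition stationary (U : Z -> mat2) (Psi : Z -> vec2) : Prop :=
  bounded_state Psi /\ forall n, evol U Psi n = Psi n.

(* S is the scattering matrix: (Psi_in^+, Psi_in^-) = (Psi_out^-, Psi_out^+) S
   for the stationary states with the prescribed values at -N0 / N0. *)
Definition is_scattering_matrix (U : Z -> mat2) (N0 : Z) (S : mat2) : Prop :=
  exists Pin_p Pin_m Pout_p Pout_m : Z -> vec2,
    stationary U Pin_p /\ stationary U Pin_m /\
    stationary U Pout_p /\ stationary U Pout_m /\
    Pin_m (- N0)%Z = (RtoC 0, RtoC 1) /\ Pout_m (- N0)%Z = (RtoC 1, RtoC 0) /\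
    Pin_p N0 = (RtoC 1, RtoC 0) /\ Pout_p N0 = (RtoC 0, RtoC 1) /\
    (forall n, Pin_p n = vadd (vscal (S 1%nat 1%nat) (Pout_m n))
                              (vscal (S 2%nat 1%nat) (Pout_p n))) /\
    (forall n, Pin_m n = vadd (vscal (S 1%nat 2%nat) (Pout_m n))
                              (vscal (S 2%nat 2%nat) (Pout_p n))).

(* Arcs of Z as a directed graph: (n;R) = (n-1,n), (n;L) = (n+1,n). *)
Inductive dir := Rd | Ld.
Definition arc := (Z * dir)%type.

Definition origin (A : arc) : Z :=
  match snd A with Rd => (fst A - 1)%Z | Ld => (fst A + 1)%Z end.
Definition terminus (A : arc) : Z := fst A.

Fixpoint chain (g : list arc) : Prop :=
  match g with
  | A :: ((B :: _) as t) => origin B = terminus A /\ chain t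
  | _ => True
  end.

Definition is_walk (g : list arc) : Prop := g <> [] /\ chain g.

Definition walk_length (g : list arc) : nat := pred (length g).

(* Phi(A_{l-1}, A_l), with m = o(A_l); for consecutive arcs the four cases
   (m;L)->(m-1;L): a_m, (m;R)->(m-1;L): b_m, (m;L)->(m+1;R): c_m,
   (m;R)->(m+1;R): a_m exhaust all possibilities. *)
Definition Phi_step (U : Z -> mat2) (A B : arc) : C :=
  let m := origin B in
  match snd A, snd B with
  | Ld, Ld => U m 1%nat 1%nat
  | Rd, Ld => U m 1%nat 2%nat
  | Ld, Rd => U m 2%nat 1%nat
  | Rd, Rd => U m 1%nat 1%nat
  end.

Fixpoint Phi (U : Z -> mat2) (g : list arc) : C :=
  match g with
  | A :: ((B :: _) as t) => Phi_step U A B * Phi U t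
  | _ => 1
  end.

Definition in_G (N0 : Z) (j k : nat) (g : list arc) : Prop :=
  is_walk g /\
  origin (hd (0%Z, Rd) g) = ((-1) ^ (Z.of_nat k - 1) * N0)%Z /\
  terminus (last g (0%Z, Rd)) = ((-1) ^ (Z.of_nat j) * N0)%Z.

Definition Csum (l : list C) : C := fold_right Cplus 0 l.

(* For a vertex p, [wave1 p L n] and [wave2 p L n] are the total amplitudes of the
   walks of length L from p whose last arc is (n;L), resp. (n;R).  Enumerating the
   walks explicitly shows that the inner sums of the theorem are wave1 + wave2 at
   the target vertex, and appending one arc shows that (wave1, wave2) evolves by the
   quantum walk itself.

   Analytic core: since U_n = I for |n| >= N0, what leaves [-N0, N0] never comes
   back, and unitarity makes the energy inside decrease by exactly what leaks
   through the two ends.  As the diagonal entries a_n never vanish, a small leak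
   during a time window forces the whole interior wave to be small; hence the
   energy decays geometrically and the wave is absolutely summable in time.

   The time-summed waves from N0 and from -N0, corrected by the incoming unit, are
   stationary on [-N0, N0].  A stationary solution there is determined by its value
   at either end, so comparing them with the outgoing stationary states yields the
   two columns of the scattering matrix, and the theorem follows. *)

From Stdlib Require Import Reals ZArith List.
From Coquelicot Require Import Coquelicot.
From Stdlib Require Import Lra Lia ClassicalEpsilon.
Import ListNotations.
Open Scope C_scope.

Lemma Cmult_nonzero_cancel (a x : C) : a <> 0 -> a * x = 0 -> x = 0.
Proof. intros Ha H. replace x with (/ a * (a * x)) by (field; exact Ha). rewrite H. ring. Qed.

Lemma Csub_eq0 (a b : C) : a - b = 0 -> a = b.
Proof. intros H. replace a with (a - b + b) by ring. rewrite H. ring. Qed.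

Lemma is_series_C_lin (f g : nat -> C) (lf lg al be : C) :
  is_series f lf -> is_series g lg ->
  is_series (fun n => al * f n + be * g n) (al * lf + be * lg).
Proof.
  intros Hf Hg.
  exact (@is_series_plus C_AbsRing C_NormedModule _ _ _ _
           (@is_series_scal C_AbsRing C_NormedModule al f lf Hf)
           (@is_series_scal C_AbsRing C_NormedModule be g lg Hg)).
Qed.

Lemma is_series_C_unique (f : nat -> C) (l1 l2 : C) :
  is_series f l1 -> is_series f l2 -> l1 = l2.
Proof.
  exact (@filterlim_locally_unique nat C_AbsRing C_NormedModule eventually _ _ _ _).
Qed.

Lemma is_series_C_null (f : nat -> C) : (forall n, f n = 0) -> is_series f (0 : C).
Proof.
  intros Hf. unfold is_series.
  eapply filterlim_ext; [|exact (filterlim_const (F := eventually) (0 : C))].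
  intros n. unfold sum_n. rewrite (sum_n_m_ext _ (fun _ => zero)) by exact Hf.
  now rewrite sum_n_m_const_zero.
Qed.

Lemma is_series_C_shift (f : nat -> C) (l : C) :
  is_series (fun n => f (S n)) l -> is_series f (f O + l).
Proof.
  intros H. apply (@is_series_decr_1 C_AbsRing C_NormedModule).
  match goal with |- is_series _ ?x => replace x with l; [exact H|] end.
  change (l = (f O + l) + - f O). ring.
Qed.

Definition Cseries (f : nat -> C) : C :=
  epsilon (inhabits (0 : C)) (fun l => is_series f l).

Lemma Cseries_spec (f : nat -> C) : ex_series f -> is_series f (Cseries f).
Proof. intros H. exact (epsilon_spec _ _ H). Qed.

Lemma Cseries_eq (f : nat -> C) (l : C) : is_series f l -> Cseries f = l.
Proof.
  intros H. apply (is_series_C_unique f); [apply Cseries_spec; now exists l | exact H].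
Qed.

(** * Enumerating walks *)

Definition next_R (A : arc) : arc := ((terminus A + 1)%Z, Rd).
Definition next_L (A : arc) : arc := ((terminus A - 1)%Z, Ld).

Definition prev_R (B : arc) : arc := (origin B, Rd).
Definition prev_L (B : arc) : arc := (origin B, Ld).

Lemma next_cases (A B : arc) : origin B = terminus A -> B = next_R A \/ B = next_L A.
Proof.
  destruct B as [m []]; unfold origin, next_R, next_L; simpl; intros H;
    [left | right]; f_equal; lia.
Qed.

Lemma origin_next_R (A : arc) : origin (next_R A) = terminus A.
Proof. unfold next_R, origin; simpl; lia. Qed.

Lemma origin_next_L (A : arc) : origin (next_L A) = terminus A.
Proof. unfold next_L, origin; simpl; lia. Qed.

Definition dir_eq_dec (d e : dir) : {d = e} + {d <> e}.
Proof. decide equality. Defined.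

Definition arc_delta (A B : arc) : C :=
  if Z.eq_dec (fst A) (fst B) then if dir_eq_dec (snd A) (snd B) then 1 else 0 else 0.

Fixpoint walks_to (A : arc) (L : nat) (q : Z) : list (list arc) :=
  match L with
  | O => if Z.eq_dec (terminus A) q then [[A]] else []
  | S L' => map (cons A) (walks_to (next_R A) L' q ++ walks_to (next_L A) L' q)
  end.

Lemma walks_to_spec (A : arc) (L : nat) (q : Z) (g : list arc) :
  In g (walks_to A L q) <->
  hd_error g = Some A /\ chain g /\ length g = S L /\ terminus (last g (0%Z, Rd)) = q.
Proof.
  revert A g; induction L as [|L IH]; intros A g; simpl.
  - destruct (Z.eq_dec (terminus A) q) as [E|E]; simpl; split.
    + intros [<-|[]]; simpl; auto.
    + intros (H1 & _ & H3 & _). destruct g as [|x [|y g']]; try discriminate.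
      inversion H1; subst; now left.
    + intros [].
    + intros (H1 & _ & H3 & H4). destruct g as [|x [|y g']]; try discriminate.
      inversion H1; subst. contradiction.
  - rewrite in_map_iff. split.
    + intros [g0 [<- Hin]]. apply in_app_or in Hin.
      destruct Hin as [Hin|Hin]; apply IH in Hin; destruct Hin as (H1 & H2 & H3 & H4);
        destruct g0 as [|y g1]; try discriminate; inversion H1; subst y;
        (split; [reflexivity|]);
        (split; [split; [first [apply origin_next_R | apply origin_next_L] | exact H2]|]);
        (simpl in *; split; [lia | exact H4]).
    + intros (H1 & H2 & H3 & H4). destruct g as [|x [|y g']]; try discriminate.
      inversion H1; subst x. exists (y :: g'). split; [reflexivity|].
      destruct H2 as [H2 H2']. apply in_or_app.
      destruct (next_cases A y H2) as [->| ->]; [left | right]; apply IH; auto.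
Qed.

Lemma walks_to_head (A : arc) (L : nat) (q : Z) (g : list arc) :
  In g (walks_to A L q) -> exists g', g = A :: g'.
Proof.
  intros H. apply walks_to_spec in H. destruct H as [H _].
  destruct g as [|x g']; inversion H; eauto.
Qed.

Lemma walks_to_disjoint (A B : arc) (L L' : nat) (q q' : Z) (g : list arc) :
  A <> B -> In g (walks_to A L q) -> ~ In g (walks_to B L' q').
Proof.
  intros HAB H1 H2. apply walks_to_head in H1. apply walks_to_head in H2.
  destruct H1 as [g1 ->], H2 as [g2 E]. inversion E. contradiction.
Qed.

Lemma walks_to_NoDup (A : arc) (L : nat) (q : Z) : NoDup (walks_to A L q).
Proof.
  revert A; induction L as [|L IH]; intros A; simpl.
  - destruct (Z.eq_dec (terminus A) q); repeat constructor; auto.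
  - apply NoDup_map_NoDup_ForallPairs.
    + intros x y _ _ H. now inversion H.
    + apply NoDup_app; auto. intros g. apply walks_to_disjoint.
      unfold next_R, next_L. intros H. now inversion H.
Qed.

Lemma Csum_app (l1 l2 : list C) : Csum (l1 ++ l2) = Csum l1 + Csum l2.
Proof. induction l1; simpl; [ring | rewrite IHl1; ring]. Qed.

(** * Transition amplitudes *)

Section Amplitudes.
Variable U : Z -> mat2.

(* [amp L A B]: total amplitude of the walks of length [L] from arc [A] to arc [B],
   computed by extending walks at the front. *)
Fixpoint amp (L : nat) (A B : arc) : C :=
  match L with
  | O => arc_delta A B
  | S L' => Phi_step U A (next_R A) * amp L' (next_R A) B
          + Phi_step U A (next_L A) * amp L' (next_L A) B
  end.

Lemma Csum_Phi_cons (A B : arc) (l : list (list arc)) :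
  (forall g, In g l -> exists g', g = B :: g') ->
  Csum (map (Phi U) (map (cons A) l)) = Phi_step U A B * Csum (map (Phi U) l).
Proof.
  induction l as [|g l IH]; intros Hl; simpl; [ring|].
  destruct (Hl g (or_introl eq_refl)) as [g' ->].
  rewrite IH by (intros; apply Hl; now right). simpl. ring.
Qed.

Lemma walks_to_sum (A : arc) (L : nat) (q : Z) :
  Csum (map (Phi U) (walks_to A L q)) = amp L A (q, Rd) + amp L A (q, Ld).
Proof.
  revert A; induction L as [|L IH]; intros A.
  - destruct A as [n []]; simpl; unfold arc_delta, terminus; simpl;
      destruct (Z.eq_dec n q); simpl; ring.
  - cbn [walks_to amp]. rewrite !map_app, Csum_app.
    rewrite (Csum_Phi_cons A (next_R A)), (Csum_Phi_cons A (next_L A)), !IH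
      by (intros; eapply walks_to_head; eauto).
    ring.
Qed.

Lemma amp_back (L : nat) (A B : arc) :
  amp (S L) A B = amp L A (prev_R B) * Phi_step U (prev_R B) B
                + amp L A (prev_L B) * Phi_step U (prev_L B) B.
Proof.
  revert A; induction L as [|L IH]; intros A.
  - destruct A as [n d], B as [m e]. simpl.
    unfold next_R, next_L, prev_R, prev_L, Phi_step, origin, terminus, arc_delta.
    simpl.
    destruct d, e; simpl; repeat destruct Z.eq_dec; try lia; subst;
      rewrite ?Z.add_simpl_r, ?Z.sub_add; ring.
  - change (amp (S (S L)) A B) with
      (Phi_step U A (next_R A) * amp (S L) (next_R A) B
       + Phi_step U A (next_L A) * amp (S L) (next_L A) B).
    rewrite !IH. simpl. ring.
Qed.

End Amplitudes.

(** * The wave emitted by a vertex *)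

Section Waves.
Variable U : Z -> mat2.

(* The entries a_m, b_m, c_m of U_m (recall d_m = a_m for U_m in S). *)
Definition ca (m : Z) : C := U m 1%nat 1%nat.
Definition cb (m : Z) : C := U m 1%nat 2%nat.
Definition cc (m : Z) : C := U m 2%nat 1%nat.

Definition start_R (p : Z) : arc := ((p + 1)%Z, Rd).
Definition start_L (p : Z) : arc := ((p - 1)%Z, Ld).

(* By [wave1_step] and
   [wave2_step] the pair is the quantum walk evolved [L] times from the state
   that is (1,0) at p-1 and (0,1) at p+1. *)
Definition wave1 (p : Z) (L : nat) (n : Z) : C :=
  amp U L (start_R p) (n, Ld) + amp U L (start_L p) (n, Ld).
Definition wave2 (p : Z) (L : nat) (n : Z) : C :=
  amp U L (start_R p) (n, Rd) + amp U L (start_L p) (n, Rd).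

Lemma wave1_step (p : Z) (L : nat) (n : Z) :
  wave1 p (S L) n = ca (n + 1) * wave1 p L (n + 1) + cb (n + 1) * wave2 p L (n + 1).
Proof.
  unfold wave1, wave2. rewrite !amp_back.
  unfold prev_R, prev_L, Phi_step, origin, ca, cb; simpl. ring.
Qed.

Lemma wave2_step (p : Z) (L : nat) (n : Z) :
  wave2 p (S L) n = cc (n - 1) * wave1 p L (n - 1) + ca (n - 1) * wave2 p L (n - 1).
Proof.
  unfold wave1, wave2. rewrite !amp_back.
  unfold prev_R, prev_L, Phi_step, origin, ca, cc; simpl. ring.
Qed.

Lemma wave1_init (p n : Z) : wave1 p 0 n = if Z.eq_dec n (p - 1) then 1 else 0.
Proof.
  unfold wave1, start_R, start_L; simpl; unfold arc_delta; simpl.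
  destruct (Z.eq_dec (p + 1) n), (Z.eq_dec (p - 1) n), (Z.eq_dec n (p - 1));
    try lia; ring.
Qed.

Lemma wave2_init (p n : Z) : wave2 p 0 n = if Z.eq_dec n (p + 1) then 1 else 0.
Proof.
  unfold wave2, start_R, start_L; simpl; unfold arc_delta; simpl.
  destruct (Z.eq_dec (p + 1) n), (Z.eq_dec (p - 1) n), (Z.eq_dec n (p + 1));
    try lia; ring.
Qed.

Definition walks_between (p q : Z) (L : nat) : list (list arc) :=
  walks_to (start_R p) L q ++ walks_to (start_L p) L q.

Lemma walks_between_spec (p q : Z) (L : nat) (g : list arc) :
  In g (walks_between p q L) <->
  (is_walk g /\ origin (hd (0%Z, Rd) g) = p /\ terminus (last g (0%Z, Rd)) = q)
  /\ walk_length g = L.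
Proof.
  unfold walks_between, is_walk, walk_length.
  rewrite in_app_iff, !walks_to_spec. split.
  - intros [(H1 & H2 & H3 & H4) | (H1 & H2 & H3 & H4)];
      (destruct g as [|A g]; [discriminate|]); inversion H1; subst A;
      (split; [|simpl in H3 |- *; lia]);
      (split; [split; [discriminate | exact H2]|]);
      (split; [unfold origin, start_R, start_L; simpl; lia | exact H4]).
  - intros [[[Hne Hc] [Ho Ht]] Hl]. destruct g as [|[m []] g]; [congruence| |];
      unfold origin in Ho; simpl in Ho, Hl; [left | right];
      (split; [unfold start_R, start_L; simpl; do 2 f_equal; lia|]);
      (split; [exact Hc|]); (split; [simpl; lia | exact Ht]).
Qed.

Lemma walks_between_NoDup (p q : Z) (L : nat) : NoDup (walks_between p q L).
Proof.
  apply NoDup_app; try apply walks_to_NoDup.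
  intros g. apply walks_to_disjoint. unfold start_R, start_L. intros H. now inversion H.
Qed.

Lemma walks_between_sum (p q : Z) (L : nat) :
  Csum (map (Phi U) (walks_between p q L)) = wave1 p L q + wave2 p L q.
Proof.
  unfold walks_between, wave1, wave2.
  rewrite map_app, Csum_app, !walks_to_sum. ring.
Qed.

End Waves.

Lemma RtoC_inj (x y : R) : RtoC x = RtoC y -> x = y.
Proof. intros H. exact (f_equal fst H). Qed.

Lemma in_S_relations (M : mat2) : in_S M ->
  M 1%nat 1%nat * Cconj (M 1%nat 1%nat) + M 1%nat 2%nat * Cconj (M 1%nat 2%nat) = 1 /\
  M 2%nat 1%nat * Cconj (M 2%nat 1%nat) + M 1%nat 1%nat * Cconj (M 1%nat 1%nat) = 1 /\
  M 1%nat 1%nat * Cconj (M 2%nat 1%nat) + M 1%nat 2%nat * Cconj (M 1%nat 1%nat) = 0.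
Proof.
  intros [Hu [Hd _]].
  pose proof (Hu 1%nat 1%nat (or_introl eq_refl) (or_introl eq_refl)) as E11.
  pose proof (Hu 2%nat 2%nat (or_intror eq_refl) (or_intror eq_refl)) as E22.
  pose proof (Hu 1%nat 2%nat (or_introl eq_refl) (or_intror eq_refl)) as E12.
  unfold kron in *; simpl in *. rewrite <- Hd in E22, E12. auto.
Qed.

Lemma in_S_isometry (M : mat2) (x y : C) : in_S M ->
  (Cmod (M 1%nat 1%nat * x + M 1%nat 2%nat * y) ^ 2
   + Cmod (M 2%nat 1%nat * x + M 1%nat 1%nat * y) ^ 2 = Cmod x ^ 2 + Cmod y ^ 2)%R.
Proof.
  intros HM. destruct (in_S_relations M HM) as (E1 & E2 & E3).
  apply RtoC_inj. rewrite !RtoC_plus, !Cmod2_conj, !Cplus_conj, !Cmult_conj.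
  set (a := M 1%nat 1%nat) in *; set (b := M 1%nat 2%nat) in *; set (c := M 2%nat 1%nat) in *.
  assert (E4 : Cconj a * c + Cconj b * a = 0).
  { apply (f_equal Cconj) in E3. rewrite Cplus_conj, !Cmult_conj, !Cconj_conj in E3.
    rewrite E3. unfold Cconj, RtoC; simpl; f_equal; ring. }
  transitivity (x * Cconj x + y * Cconj y
     + (a * Cconj a + c * Cconj c - 1) * (x * Cconj x)
     + (a * Cconj a + b * Cconj b - 1) * (y * Cconj y)
     + (Cconj a * c + Cconj b * a) * (x * Cconj y)
     + (a * Cconj c + b * Cconj a) * (y * Cconj x)); [ring|].
  rewrite E3, E4.
  replace (a * Cconj a + c * Cconj c - 1) with (0 : C) by (rewrite <- E2; ring).
  replace (a * Cconj a + b * Cconj b - 1) with (0 : C) by (rewrite <- E1; ring).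
  ring.
Qed.

Lemma in_S_entry_bounds (M : mat2) : in_S M ->
  (Cmod (M 1%nat 1%nat) <= 1 /\ Cmod (M 1%nat 2%nat) <= 1 /\ Cmod (M 2%nat 1%nat) <= 1
   /\ 0 < Cmod (M 1%nat 1%nat))%R.
Proof.
  intros HM. destruct (in_S_relations M HM) as (E1 & E2 & _).
  assert (R1 : (Cmod (M 1%nat 1%nat) ^ 2 + Cmod (M 1%nat 2%nat) ^ 2 = 1)%R).
  { apply RtoC_inj. now rewrite RtoC_plus, !Cmod2_conj. }
  assert (R2 : (Cmod (M 2%nat 1%nat) ^ 2 + Cmod (M 1%nat 1%nat) ^ 2 = 1)%R).
  { apply RtoC_inj. now rewrite RtoC_plus, !Cmod2_conj. }
  pose proof (Cmod_ge_0 (M 1%nat 1%nat)). pose proof (Cmod_ge_0 (M 1%nat 2%nat)).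
  pose proof (Cmod_ge_0 (M 2%nat 1%nat)).
  pose proof (proj1 (Cmod_gt_0 _) (proj2 (proj2 HM))).
  repeat split; nra.
Qed.

Open Scope R_scope.

Fixpoint sumZ (f : Z -> R) (lo : Z) (k : nat) : R :=
  match k with
  | O => 0
  | S k' => f lo + sumZ f (lo + 1)%Z k'
  end.

Lemma sumZ_ext (f g : Z -> R) (lo : Z) (k : nat) :
  (forall m, f m = g m) -> sumZ f lo k = sumZ g lo k.
Proof. intros H. revert lo; induction k; intros lo; simpl; [|rewrite H, IHk]; reflexivity. Qed.

Lemma sumZ_plus (f g : Z -> R) (lo : Z) (k : nat) :
  sumZ (fun m => f m + g m) lo k = sumZ f lo k + sumZ g lo k.
Proof. revert lo; induction k; intros lo; simpl; [ring | rewrite IHk; ring]. Qed.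

Lemma sumZ_nonneg (f : Z -> R) (lo : Z) (k : nat) :
  (forall m, 0 <= f m) -> 0 <= sumZ f lo k.
Proof.
  intros H. revert lo; induction k; intros lo; simpl; [lra|].
  specialize (IHk (lo + 1)%Z). specialize (H lo). lra.
Qed.

Lemma sumZ_shift_up (g : Z -> R) (lo : Z) (k : nat) :
  sumZ (fun m => g (m + 1)%Z) lo k = sumZ g lo k + g (lo + Z.of_nat k)%Z - g lo.
Proof.
  revert lo; induction k as [|k IH]; intros lo; simpl.
  - rewrite Z.add_0_r. ring.
  - rewrite IH. replace (lo + 1 + Z.of_nat k)%Z with (lo + Z.pos (Pos.of_succ_nat k))%Z
      by lia. ring.
Qed.

Lemma sumZ_shift_down (g : Z -> R) (lo : Z) (k : nat) :
  sumZ (fun m => g (m - 1)%Z) lo k = sumZ g lo k + g (lo - 1)%Z - g (lo - 1 + Z.of_nat k)%Z.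
Proof.
  pose proof (sumZ_shift_up (fun m => g (m - 1)%Z) lo k) as H.
  rewrite (sumZ_ext (fun m => g (m + 1 - 1)%Z) g) in H
    by (intros m; now rewrite Z.add_simpl_r).
  replace (lo + Z.of_nat k - 1)%Z with (lo - 1 + Z.of_nat k)%Z in H by lia. lra.
Qed.

Lemma sumZ_le_const (f : Z -> R) (lo : Z) (k : nat) (c : R) :
  (forall i, (i < k)%nat -> f (lo + Z.of_nat i)%Z <= c) -> sumZ f lo k <= INR k * c.
Proof.
  revert lo; induction k as [|k IH]; intros lo H; [simpl; lra|].
  rewrite S_INR. cbn [sumZ].
  assert (H0 := H O ltac:(lia)). rewrite Z.add_0_r in H0.
  assert (sumZ f (lo + 1) k <= INR k * c).
  { apply IH. intros i Hi. replace (lo + 1 + Z.of_nat i)%Z with (lo + Z.of_nat (S i))%Z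
      by lia. apply H. lia. }
  lra.
Qed.

Lemma sumZ_term (f : Z -> R) (lo : Z) (k : nat) (i : nat) :
  (forall m, 0 <= f m) -> (i < k)%nat -> f (lo + Z.of_nat i)%Z <= sumZ f lo k.
Proof.
  revert lo i; induction k as [|k IH]; intros lo i H Hi; [lia|]. simpl.
  destruct i as [|i].
  - rewrite Z.add_0_r. pose proof (sumZ_nonneg f (lo + 1) k H). lra.
  - replace (lo + Z.of_nat (S i))%Z with (lo + 1 + Z.of_nat i)%Z by lia.
    specialize (IH (lo + 1)%Z i H ltac:(lia)). specialize (H lo). lra.
Qed.

Lemma le_sqrt_of_sq (x y : R) : 0 <= x -> x ^ 2 <= y -> x <= sqrt y.
Proof. intros H1 H2. rewrite <- (sqrt_pow2 x H1). now apply sqrt_le_1_alt. Qed.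

Lemma positive_lower_bound (f : Z -> R) (lo : Z) (k : nat) :
  (forall m, 0 < f m) ->
  exists al, 0 < al <= 1 /\ forall i, (i < k)%nat -> al <= f (lo + Z.of_nat i)%Z.
Proof.
  intros Hf. induction k as [|k [al [Hal Hi]]].
  - exists 1. split; [lra | intros; lia].
  - exists (Rmin al (f (lo + Z.of_nat k)%Z)).
    pose proof (Rmin_l al (f (lo + Z.of_nat k)%Z)).
    pose proof (Rmin_r al (f (lo + Z.of_nat k)%Z)).
    split; [split; [apply Rmin_glb_lt; auto; lra | lra]|].
    intros i Hik. destruct (Nat.eq_dec i k) as [->|Hne]; [lra|].
    specialize (Hi i ltac:(lia)). lra.
Qed.

Lemma geometric_decay_summable (f : nat -> R) (M : nat) (rho : R) :
  (0 < M)%nat -> 0 < rho < 1 -> (forall n, 0 <= f n) ->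
  (forall n, f (S n) <= f n) -> (forall T, f (T + M)%nat <= rho * f T) ->
  ex_series f.
Proof.
  intros HM Hrho Hpos Hdec Hstep.
  assert (Hmono : forall a b, (a <= b)%nat -> f b <= f a).
  { induction 1 as [|b _ IH]; [lra|]. specialize (Hdec b). lra. }
  assert (Hk : forall k, f (M * k)%nat <= rho ^ k * f O).
  { induction k as [|k IH]; [rewrite Nat.mul_0_r; simpl; lra|].
    replace (M * S k)%nat with (M * k + M)%nat by lia.
    specialize (Hstep (M * k)%nat). pose proof (Hpos (M * k)%nat). simpl. nra. }
  (* the M-th root of rho is the ratio of the dominating geometric sequence *)
  set (s := Rpower rho (/ INR M)).
  assert (Hs0 : 0 < s) by (unfold s, Rpower; apply exp_pos).
  assert (HsM : s ^ M = rho).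
  { unfold s. rewrite <- Rpower_pow by (unfold Rpower; apply exp_pos).
    rewrite Rpower_mult, Rinv_l by (apply not_0_INR; lia). apply Rpower_1. lra. }
  assert (Hs1 : s < 1).
  { destruct (Rlt_le_dec s 1) as [H|H]; [exact H|].
    assert (1 <= s ^ M) by (rewrite <- (pow1 M); apply pow_incr; lra). lra. }
  apply (@ex_series_le R_AbsRing R_CompleteNormedModule f (fun n => (f O / rho) * s ^ n)).
  - intros n. change (norm (f n)) with (Rabs (f n)). rewrite Rabs_pos_eq by auto.
    set (k := (n / M)%nat).
    assert (Hdiv := Nat.div_mod n M ltac:(lia)).
    assert (Hmod := Nat.mod_upper_bound n M ltac:(lia)). fold k in Hdiv.
    assert (H1 : f n <= rho ^ k * f O) by (eapply Rle_trans; [apply Hmono | apply Hk]; lia).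
    assert (H2 : s ^ n >= s ^ (M * S k)).
    { apply Rle_ge. replace (M * S k)%nat with (n + (M * S k - n))%nat by lia.
      rewrite pow_add. pose proof (pow_le s n ltac:(lra)).
      assert (s ^ (M * S k - n) <= 1) by (rewrite <- (pow1 (M * S k - n)); apply pow_incr; lra).
      nra. }
    rewrite pow_mult, HsM in H2. simpl in H2.
    pose proof (Hpos O). pose proof (pow_le rho k ltac:(lra)).
    apply Rle_trans with (rho ^ k * f O); [exact H1|].
    apply (Rmult_le_reg_r rho); [lra|].
    replace (f O / rho * s ^ n * rho) with (f O * s ^ n) by (field; lra). nra.
  - apply (@ex_series_scal_l R_AbsRing R_NormedModule (f O / rho) (fun n => s ^ n)).
    apply ex_series_geom. rewrite Rabs_pos_eq; lra.
Qed.

(** * Energy of the wave inside the scattering region *)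

Section Region.
Variables (U : Z -> mat2) (N0 : Z).
Hypothesis HS : forall n, in_S (U n).
Hypothesis HN0 : (1 <= N0)%Z.
Hypothesis Hid : forall n, (N0 <= Z.abs n)%Z -> is_id2 (U n).

Lemma coef_outside (m : Z) : (N0 <= Z.abs m)%Z ->
  ca U m = 1%C /\ cb U m = 0%C /\ cc U m = 0%C.
Proof.
  intros Hm. unfold ca, cb, cc.
  rewrite !(Hid m Hm); unfold inI2; auto.
Qed.

Section Source.
Variable p : Z.
Hypothesis Hp : (-N0 <= p <= N0)%Z.

(* Outside the scattering region the wave only moves outwards: nothing moves left
   at sites >= N0 and nothing moves right at sites <= -N0. *)
Lemma wave1_right (L : nat) (n : Z) : (N0 <= n)%Z -> wave1 U p L n = 0%C.
Proof.
  revert n; induction L as [|L IH]; intros n Hn.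
  - rewrite wave1_init. destruct Z.eq_dec; [lia | reflexivity].
  - rewrite wave1_step, IH by lia.
    destruct (coef_outside (n + 1) ltac:(lia)) as (_ & -> & _). ring.
Qed.

Lemma wave2_left (L : nat) (n : Z) : (n <= -N0)%Z -> wave2 U p L n = 0%C.
Proof.
  revert n; induction L as [|L IH]; intros n Hn.
  - rewrite wave2_init. destruct Z.eq_dec; [lia | reflexivity].
  - rewrite wave2_step, IH by lia.
    destruct (coef_outside (n - 1) ltac:(lia)) as (_ & _ & ->). ring.
Qed.

(* Hence nothing re-enters the interior from outside. *)
Lemma wave1_no_return (L : nat) : wave1 U p (S L) (N0 - 1) = 0%C.
Proof.
  rewrite wave1_step, Z.sub_add, wave1_right by lia.
  destruct (coef_outside N0 ltac:(lia)) as (_ & -> & _). ring.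
Qed.

Lemma wave2_no_return (L : nat) : wave2 U p (S L) (-N0 + 1) = 0%C.
Proof.
  rewrite wave2_step, Z.add_simpl_r, wave2_left by lia.
  destruct (coef_outside (- N0) ltac:(lia)) as (_ & _ & ->). ring.
Qed.

(* Number of interior sites -N0+1, ..., N0-1. *)
Definition interior_size : nat := Z.to_nat (2 * N0 - 1).

Definition density (L : nat) (m : Z) : R :=
  Cmod (wave1 U p L m) ^ 2 + Cmod (wave2 U p L m) ^ 2.

Definition energy (L : nat) : R := sumZ (density L) (-N0 + 1) interior_size.

Lemma density_nonneg (L : nat) (m : Z) : 0 <= density L m.
Proof. unfold density. pose proof (pow2_ge_0 (Cmod (wave1 U p L m))). nra. Qed.

Lemma energy_nonneg (L : nat) : 0 <= energy L.
Proof. apply sumZ_nonneg, density_nonneg. Qed.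

Lemma energy_step (L : nat) :
  energy L = energy (S L) + Cmod (wave1 U p (S L) (- N0)) ^ 2
                          + Cmod (wave2 U p (S L) N0) ^ 2.
Proof.
  unfold energy.
  rewrite (sumZ_ext (density L)
    (fun m => Cmod (wave1 U p (S L) (m - 1)) ^ 2 + Cmod (wave2 U p (S L) (m + 1)) ^ 2)).
  2:{ intros m. rewrite wave1_step, wave2_step, Z.sub_add, Z.add_simpl_r.
      symmetry. apply (in_S_isometry (U m)), HS. }
  rewrite sumZ_plus, (sumZ_shift_down (fun m => Cmod (wave1 U p (S L) m) ^ 2)),
    (sumZ_shift_up (fun m => Cmod (wave2 U p (S L) m) ^ 2)).
  unfold interior_size. rewrite Z2Nat.id by lia.
  replace (-N0 + 1 - 1 + (2 * N0 - 1))%Z with (N0 - 1)%Z by lia.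
  replace (-N0 + 1 + (2 * N0 - 1))%Z with N0 by lia.
  replace (-N0 + 1 - 1)%Z with (- N0)%Z by lia.
  rewrite wave1_no_return, wave2_no_return, Cmod_0.
  unfold density. rewrite sumZ_plus. ring.
Qed.

Lemma energy_mono (L1 L2 : nat) : (L1 <= L2)%nat -> energy L2 <= energy L1.
Proof.
  induction 1 as [|L2 _ IH]; [lra|]. rewrite (energy_step L2) in IH.
  pose proof (pow2_ge_0 (Cmod (wave1 U p (S L2) (- N0)))).
  pose proof (pow2_ge_0 (Cmod (wave2 U p (S L2) N0))). lra.
Qed.

Lemma interior_bound (L : nat) (m : Z) : (-N0 + 1 <= m <= N0 - 1)%Z ->
  Cmod (wave1 U p L m) <= sqrt (energy L) /\ Cmod (wave2 U p L m) <= sqrt (energy L).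
Proof.
  intros Hm.
  assert (H : density L m <= energy L).
  { replace m with (-N0 + 1 + Z.of_nat (Z.to_nat (m - (-N0 + 1))))%Z at 1 by lia.
    apply sumZ_term; [apply density_nonneg | unfold interior_size; lia]. }
  unfold density in H.
  pose proof (pow2_ge_0 (Cmod (wave1 U p L m))). pose proof (pow2_ge_0 (Cmod (wave2 U p L m))).
  split; apply le_sqrt_of_sq; try apply Cmod_ge_0; lra.
Qed.

(* On the closed region [-N0, N0] the wave at time L+1 is controlled by the
   energy at time L: inside by monotonicity, at the ends by the energy balance. *)
Lemma wave_bound (L : nat) (n : Z) : (-N0 <= n <= N0)%Z ->
  Cmod (wave1 U p (S L) n) <= sqrt (energy L) /\ Cmod (wave2 U p (S L) n) <= sqrt (energy L).
Proof.
  intros Hn.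
  pose proof (energy_step L) as Hstep. pose proof (energy_nonneg (S L)).
  pose proof (pow2_ge_0 (Cmod (wave1 U p (S L) (- N0)))).
  pose proof (pow2_ge_0 (Cmod (wave2 U p (S L) N0))).
  pose proof (sqrt_pos (energy L)).
  assert (Hint : forall m, (-N0 + 1 <= m <= N0 - 1)%Z ->
            Cmod (wave1 U p (S L) m) <= sqrt (energy L)
            /\ Cmod (wave2 U p (S L) m) <= sqrt (energy L)).
  { intros m Hm. destruct (interior_bound (S L) m Hm) as [Hx Hy].
    pose proof (sqrt_le_1_alt _ _ (energy_mono L (S L) ltac:(lia))). lra. }
  destruct (Z.eq_dec n (- N0)) as [->|Hl]; [|destruct (Z.eq_dec n N0) as [->|Hr]].
  - rewrite wave2_left, Cmod_0 by lia. split; [|lra].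
    apply le_sqrt_of_sq; [apply Cmod_ge_0 | lra].
  - rewrite wave1_right, Cmod_0 by lia. split; [lra|].
    apply le_sqrt_of_sq; [apply Cmod_ge_0 | lra].
  - apply Hint. lia.
Qed.

(* A site whose diagonal entry is not small can be crossed backwards: if the
   left-moving wave leaving it and the right-moving wave arriving at it are small,
   so is the whole wave there, and hence the right-moving wave leaving it. *)
Lemma propagate_site (al beta : R) (L : nat) (m : Z) :
  0 < al <= 1 -> al <= Cmod (ca U m) -> 0 <= beta ->
  Cmod (wave1 U p (S L) (m - 1)) <= beta -> Cmod (wave2 U p L m) <= beta ->
  Cmod (wave1 U p L m) <= 3 * beta / al /\ Cmod (wave2 U p (S L) (m + 1)) <= 3 * beta / al.
Proof.
  intros Hal Ha Hb H1 H2.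
  destruct (in_S_entry_bounds (U m) (HS m)) as (Ba & Bb & Bc & Bpos).
  change (U m 1%nat 1%nat) with (ca U m) in Ba, Bpos.
  change (U m 1%nat 2%nat) with (cb U m) in Bb.
  change (U m 2%nat 1%nat) with (cc U m) in Bc.
  assert (Ha0 : ca U m <> 0%C) by (intros E; rewrite E, Cmod_0 in Bpos; lra).
  assert (Hbeta : beta <= beta / al).
  { unfold Rdiv. rewrite <- (Rmult_1_r beta) at 1. apply Rmult_le_compat_l; [lra|].
    rewrite <- Rinv_1. apply Rinv_le_contravar; lra. }
  assert (HX : Cmod (wave1 U p L m) <= 2 * beta / al).
  { assert (E : wave1 U p L m
                = ((wave1 U p (S L) (m - 1) - cb U m * wave2 U p L m) / ca U m)%C).
    { rewrite wave1_step, Z.sub_add. field. exact Ha0. }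
    assert (Hnum : Cmod (wave1 U p (S L) (m - 1) - cb U m * wave2 U p L m) <= 2 * beta).
    { unfold Cminus. eapply Rle_trans; [apply Cmod_triangle|].
      rewrite Cmod_opp, Cmod_mult. pose proof (Cmod_ge_0 (wave2 U p L m)). nra. }
    rewrite E, Cmod_div by exact Ha0. unfold Rdiv.
    apply Rmult_le_compat; [apply Cmod_ge_0 | left; apply Rinv_0_lt_compat; lra
                           | exact Hnum | apply Rinv_le_contravar; lra]. }
  split; [unfold Rdiv in *; lra|].
  rewrite wave2_step, Z.add_simpl_r.
  eapply Rle_trans; [apply Cmod_triangle|]. rewrite !Cmod_mult.
  pose proof (Cmod_ge_0 (wave1 U p L m)). pose proof (Cmod_ge_0 (wave2 U p L m)).
  assert (Cmod (cc U m) * Cmod (wave1 U p L m) <= 2 * beta / al) by nra.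
  assert (Cmod (ca U m) * Cmod (wave2 U p L m) <= beta) by nra.
  unfold Rdiv in *. lra.
Qed.

(* If little leaves through the left end during a time window, then, crossing the
   interior site by site from the left, the whole wave is small at intermediate
   times. *)
Lemma reconstruct (al lam : R) (T M : nat) :
  0 < al <= 1 ->
  (forall i, (i < interior_size)%nat -> al <= Cmod (ca U (-N0 + 1 + Z.of_nat i))) ->
  0 <= lam ->
  (forall L, (T < L <= T + M)%nat -> Cmod (wave1 U p L (- N0)) <= lam) ->
  forall i, (i <= interior_size)%nat ->
  forall L, (T + 1 + i <= L)%nat -> (L + i <= T + M)%nat ->
  Cmod (wave1 U p L (-N0 + Z.of_nat i)) <= (3 / al) ^ i * lam /\
  Cmod (wave2 U p L (-N0 + 1 + Z.of_nat i)) <= (3 / al) ^ i * lam.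
Proof.
  intros Hal Hai Hlam Hleak i.
  induction i as [|i IH]; intros Hi L H1 H2.
  - rewrite !Z.add_0_r, pow_O, Rmult_1_l. split; [apply Hleak; lia|].
    destruct L as [|L]; [lia|]. rewrite wave2_no_return, Cmod_0. exact Hlam.
  - set (m := (-N0 + 1 + Z.of_nat i)%Z).
    set (beta := (3 / al) ^ i * lam).
    assert (Hbeta : 0 <= beta) by (apply Rmult_le_pos; [apply pow_le, Rlt_le, Rdiv_lt_0_compat | ]; lra).
    assert (Hm : al <= Cmod (ca U m)) by (apply Hai; lia).
    assert (Hnext : 3 * beta / al = (3 / al) ^ S i * lam) by (unfold beta; simpl; field; lra).
    replace (-N0 + Z.of_nat (S i))%Z with m by (unfold m; lia).
    replace (-N0 + 1 + Z.of_nat (S i))%Z with (m + 1)%Z by (unfold m; lia).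
    rewrite <- Hnext. destruct L as [|L]; [lia|].
    assert (HL1 := IH ltac:(lia) (S (S L)) ltac:(lia) ltac:(lia)).
    assert (HL0 := IH ltac:(lia) (S L) ltac:(lia) ltac:(lia)).
    assert (HL := IH ltac:(lia) L ltac:(lia) ltac:(lia)).
    replace (-N0 + Z.of_nat i)%Z with (m - 1)%Z in HL1, HL0 by (unfold m; lia).
    fold m beta in HL1, HL0, HL.
    split.
    + apply (propagate_site al beta (S L) m Hal Hm Hbeta); tauto.
    + apply (propagate_site al beta L m Hal Hm Hbeta); tauto.
Qed.

Definition window : nat := 2 * interior_size + 2.

Lemma midwindow_energy (al lam : R) (T : nat) :
  0 < al <= 1 ->
  (forall i, (i < interior_size)%nat -> al <= Cmod (ca U (-N0 + 1 + Z.of_nat i))) ->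
  0 <= lam ->
  (forall L, (T < L <= T + window)%nat -> Cmod (wave1 U p L (- N0)) <= lam) ->
  energy (T + interior_size + 1)
    <= INR interior_size * (2 * ((3 / al) ^ interior_size) ^ 2) * lam ^ 2.
Proof.
  intros Hal Hai Hlam Hleak.
  set (cnt := interior_size). set (rate := 3 / al). set (T' := (T + cnt + 1)%nat).
  assert (Hrate : 1 <= rate).
  { unfold rate. apply (Rmult_le_reg_r al); [lra|].
    unfold Rdiv. rewrite Rmult_assoc, Rinv_l by lra. lra. }
  unfold energy. rewrite Rmult_assoc. apply sumZ_le_const. intros i Hi.
  destruct (reconstruct al lam T window Hal Hai Hlam Hleak i ltac:(unfold cnt in Hi; lia) T'
              ltac:(unfold T'; lia) ltac:(unfold T', window; lia)) as [_ HY].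
  destruct (reconstruct al lam T window Hal Hai Hlam Hleak (S i) ltac:(unfold cnt in Hi; lia) T'
              ltac:(unfold T'; lia) ltac:(unfold T', window; lia)) as [HX _].
  replace (-N0 + Z.of_nat (S i))%Z with (-N0 + 1 + Z.of_nat i)%Z in HX by lia.
  fold rate in HX, HY.
  assert (rate ^ S i * lam <= rate ^ cnt * lam)
    by (apply Rmult_le_compat_r; [|apply Rle_pow]; auto; lia).
  assert (rate ^ i * lam <= rate ^ cnt * lam)
    by (apply Rmult_le_compat_r; [|apply Rle_pow]; auto; lia).
  unfold density.
  assert (Cmod (wave1 U p T' (-N0 + 1 + Z.of_nat i)) ^ 2 <= (rate ^ cnt) ^ 2 * lam ^ 2)
    by (rewrite <- Rpow_mult_distr; apply pow_incr; split; [apply Cmod_ge_0 | lra]).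
  assert (Cmod (wave2 U p T' (-N0 + 1 + Z.of_nat i)) ^ 2 <= (rate ^ cnt) ^ 2 * lam ^ 2)
    by (rewrite <- Rpow_mult_distr; apply pow_incr; split; [apply Cmod_ge_0 | lra]).
  lra.
Qed.

(* The energy decays geometrically: over a window it loses a fixed fraction of
   itself.  Indeed, with lam^2 = E_T - E_(T+window) bounding the leakage through
   the left end, [midwindow_energy] gives E_(T+window) <= C * lam^2. *)
Lemma energy_decay : exists q : R, 0 < q < 1 /\ forall T, energy (T + window) <= q * energy T.
Proof.
  destruct (positive_lower_bound (fun m => Cmod (ca U m)) (-N0 + 1) interior_size)
    as [al [Hal Hai]].
  { intros m. apply (in_S_entry_bounds (U m) (HS m)). }
  set (Cst := INR interior_size * (2 * ((3 / al) ^ interior_size) ^ 2)).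
  assert (HC : 0 < Cst).
  { apply Rmult_lt_0_compat; [apply lt_0_INR; unfold interior_size; lia|].
    apply Rmult_lt_0_compat; [lra|]. apply pow_lt, pow_lt, Rdiv_lt_0_compat; lra. }
  exists (Cst / (1 + Cst)). split.
  { split; [apply Rdiv_lt_0_compat; lra|].
    apply (Rmult_lt_reg_r (1 + Cst)); [lra|].
    unfold Rdiv. rewrite Rmult_assoc, Rinv_l by lra. lra. }
  intros T.
  assert (Hdrop : 0 <= energy T - energy (T + window))
    by (pose proof (energy_mono T (T + window) ltac:(lia)); lra).
  set (lam := sqrt (energy T - energy (T + window))).
  assert (Hleak : forall L, (T < L <= T + window)%nat -> Cmod (wave1 U p L (- N0)) <= lam).
  { intros [|L] HL; [lia|].
    apply le_sqrt_of_sq; [apply Cmod_ge_0|].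
    pose proof (energy_step L). pose proof (pow2_ge_0 (Cmod (wave2 U p (S L) N0))).
    pose proof (energy_mono T L ltac:(lia)).
    pose proof (energy_mono (S L) (T + window) ltac:(lia)). lra. }
  pose proof (midwindow_energy al lam T Hal Hai (sqrt_pos _) Hleak) as Hmid.
  fold Cst in Hmid. unfold lam in Hmid. rewrite pow2_sqrt in Hmid by exact Hdrop.
  assert (energy (T + window) <= energy (T + interior_size + 1))
    by (apply energy_mono; unfold window; lia).
  apply (Rmult_le_reg_r (1 + Cst)); [lra|].
  replace (Cst / (1 + Cst) * energy T * (1 + Cst)) with (Cst * energy T) by (field; lra).
  nra.
Qed.

Lemma sqrt_energy_summable : ex_series (fun L => sqrt (energy L)).
Proof.
  destruct energy_decay as (q & Hq & HT).
  apply (geometric_decay_summable _ window (sqrt q)); auto.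
  - unfold window. lia.
  - split; [apply sqrt_lt_R0; lra|]. rewrite <- sqrt_1. apply sqrt_lt_1; lra.
  - intros; apply sqrt_pos.
  - intros n. apply sqrt_le_1_alt, energy_mono. lia.
  - intros T. rewrite <- sqrt_mult by (lra || apply energy_nonneg).
    apply sqrt_le_1_alt, HT.
Qed.

(** * Summing the wave over time *)

Open Scope C_scope.

Definition wsum1 (n : Z) : C := Cseries (fun L => wave1 U p L n).
Definition wsum2 (n : Z) : C := Cseries (fun L => wave2 U p L n).

(* On [-N0, N0] the wave is absolutely summable in time, being dominated by the
   square root of the energy. *)
Lemma wave_summable (n : Z) : (-N0 <= n <= N0)%Z ->
  ex_series (fun L => wave1 U p L n) /\ ex_series (fun L => wave2 U p L n).
Proof.
  intros Hn. pose proof sqrt_energy_summable as Hsum.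
  pose proof wave_bound as Hb.
  split; apply ex_series_incr_1;
    apply (@ex_series_le C_AbsRing C_CompleteNormedModule _ (fun L => sqrt (energy L)));
    try exact Hsum; intros L;
    first [exact (proj1 (Hb L n Hn)) | exact (proj2 (Hb L n Hn))].
Qed.

Lemma wsum1_step (n : Z) : (-N0 <= n < N0)%Z ->
  wsum1 n = wave1 U p 0 n + (ca U (n + 1) * wsum1 (n + 1) + cb U (n + 1) * wsum2 (n + 1)).
Proof.
  intros Hn. destruct (wave_summable (n + 1) ltac:(lia)) as [H1 H2].
  apply Cseries_eq, is_series_C_shift.
  eapply (@is_series_ext C_AbsRing C_NormedModule);
    [|exact (is_series_C_lin _ _ _ _ _ _ (Cseries_spec _ H1) (Cseries_spec _ H2))].
  intros L. symmetry. apply wave1_step.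
Qed.

Lemma wsum2_step (n : Z) : (-N0 <= n < N0)%Z ->
  wsum2 (n + 1) = wave2 U p 0 (n + 1) + (cc U n * wsum1 n + ca U n * wsum2 n).
Proof.
  intros Hn. destruct (wave_summable n ltac:(lia)) as [H1 H2].
  apply Cseries_eq, is_series_C_shift.
  eapply (@is_series_ext C_AbsRing C_NormedModule);
    [|exact (is_series_C_lin _ _ _ _ _ _ (Cseries_spec _ H1) (Cseries_spec _ H2))].
  intros L. symmetry. rewrite wave2_step, Z.add_simpl_r. reflexivity.
Qed.

Lemma wsum1_right : wsum1 N0 = 0.
Proof. apply Cseries_eq, is_series_C_null. intros L. apply wave1_right; lia. Qed.

Lemma wsum2_left : wsum2 (- N0) = 0.
Proof. apply Cseries_eq, is_series_C_null. intros L. apply wave2_left; lia. Qed.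

Lemma walk_sums_series (q : Z) : (-N0 <= q <= N0)%Z -> q <> (p - 1)%Z -> q <> (p + 1)%Z ->
  is_series (fun n => wave1 U p (S n) q + wave2 U p (S n) q) (wsum1 q + wsum2 q).
Proof.
  intros Hq Hq1 Hq2. destruct (wave_summable q Hq) as [H1 H2].
  pose proof (is_series_C_lin _ _ _ _ 1 1 (Cseries_spec _ H1) (Cseries_spec _ H2)) as H.
  assert (H0 : wave1 U p 0 q + wave2 U p 0 q = 0).
  { rewrite wave1_init, wave2_init. do 2 (destruct Z.eq_dec; [lia|]). ring. }
  apply (@is_series_incr_1 C_AbsRing C_NormedModule (fun n => wave1 U p n q + wave2 U p n q)).
  match goal with |- is_series _ ?x => replace x with (1 * wsum1 q + 1 * wsum2 q) end.
  - eapply (@is_series_ext C_AbsRing C_NormedModule); [|exact H]. intros n. simpl. ring.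
  - change (1 * wsum1 q + 1 * wsum2 q
            = (wsum1 q + wsum2 q) + (wave1 U p 0 q + wave2 U p 0 q)).
    rewrite H0. ring.
Qed.

Lemma walk_sums_abs_summable (q : Z) : (-N0 <= q <= N0)%Z ->
  ex_series (fun n => Cmod (wave1 U p (S n) q + wave2 U p (S n) q)).
Proof.
  intros Hq. pose proof sqrt_energy_summable as Hsum.
  apply (@ex_series_le R_AbsRing R_CompleteNormedModule _ (fun n => 2 * sqrt (energy n))%R).
  - intros n. change (norm (Cmod (wave1 U p (S n) q + wave2 U p (S n) q)))
      with (Rabs (Cmod (wave1 U p (S n) q + wave2 U p (S n) q))).
    rewrite Rabs_pos_eq by apply Cmod_ge_0.
    destruct (wave_bound n q Hq) as [B1 B2].
    pose proof (Cmod_triangle (wave1 U p (S n) q) (wave2 U p (S n) q)). lra.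
  - exact (@ex_series_scal_l R_AbsRing R_NormedModule 2 _ Hsum).
Qed.

End Source.

(** * Identifying the scattering matrix *)

Open Scope C_scope.

Definition stationary_on (d1 d2 : Z -> C) : Prop :=
  forall n, (-N0 <= n < N0)%Z ->
    d1 n = ca U (n + 1) * d1 (n + 1)%Z + cb U (n + 1) * d2 (n + 1)%Z /\
    d2 (n + 1)%Z = cc U n * d1 n + ca U n * d2 n.

Lemma stationary_on_sub (a1 a2 b1 b2 : Z -> C) (t : C) :
  stationary_on a1 a2 -> stationary_on b1 b2 ->
  stationary_on (fun n => a1 n - t * b1 n) (fun n => a2 n - t * b2 n).
Proof.
  intros Ha Hb n Hn. destruct (Ha n Hn) as [A1 A2], (Hb n Hn) as [B1 B2].
  split; [rewrite A1, B1 | rewrite A2, B2]; ring.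
Qed.

Lemma stationary_on_of_stationary (Psi : Z -> vec2) :
  stationary U Psi -> stationary_on (fun n => fst (Psi n)) (fun n => snd (Psi n)).
Proof.
  intros [_ H] n _. pose proof (H n) as E1. pose proof (H (n + 1)%Z) as E2.
  unfold evol in E1, E2. rewrite Z.add_simpl_r in E2. destruct (HS n) as (_ & Hd & _).
  split; [rewrite <- E1 | rewrite <- E2];
    unfold vadd, mulmv, Pm, Qm, ca, cb, cc; simpl; rewrite ?Hd; ring.
Qed.

(* Since the diagonal entries do not vanish, a solution of the stationary equations
   vanishing at one end of [-N0, N0] vanishes at the other. *)
Lemma stationary_on_zero_up (d1 d2 : Z -> C) : stationary_on d1 d2 ->
  d1 (- N0)%Z = 0 -> d2 (- N0)%Z = 0 -> d1 N0 = 0 /\ d2 N0 = 0.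
Proof.
  intros H H1 H2.
  enough (K : forall k, (0 <= k)%Z -> (k <= 2 * N0)%Z ->
                       d1 (-N0 + k)%Z = 0 /\ d2 (-N0 + k)%Z = 0)
    by (replace N0 with (-N0 + 2 * N0)%Z by lia; apply K; lia).
  apply (natlike_ind (fun k => (k <= 2 * N0)%Z -> d1 (-N0 + k)%Z = 0 /\ d2 (-N0 + k)%Z = 0)).
  { rewrite Z.add_0_r. auto. }
  intros k Hk IH Hk1.
  set (n := (-N0 + k)%Z) in IH. replace (-N0 + Z.succ k)%Z with (n + 1)%Z by (unfold n; lia).
  destruct (IH ltac:(lia)) as [E1 E2], (H n ltac:(unfold n; lia)) as [Ex Ey].
  assert (F2 : d2 (n + 1)%Z = 0) by (rewrite Ey, E1, E2; ring).
  split; [|exact F2].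
  apply (Cmult_nonzero_cancel (ca U (n + 1))); [apply (HS (n + 1))|].
  transitivity (d1 n); [rewrite Ex, F2; ring | exact E1].
Qed.

Lemma stationary_on_zero_down (d1 d2 : Z -> C) : stationary_on d1 d2 ->
  d1 N0 = 0 -> d2 N0 = 0 -> d1 (- N0)%Z = 0 /\ d2 (- N0)%Z = 0.
Proof.
  intros H H1 H2.
  enough (K : forall k, (0 <= k)%Z -> (k <= 2 * N0)%Z ->
                       d1 (N0 - k)%Z = 0 /\ d2 (N0 - k)%Z = 0)
    by (replace (- N0)%Z with (N0 - 2 * N0)%Z by lia; apply K; lia).
  apply (natlike_ind (fun k => (k <= 2 * N0)%Z -> d1 (N0 - k)%Z = 0 /\ d2 (N0 - k)%Z = 0)).
  { rewrite Z.sub_0_r. auto. }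
  intros k Hk IH Hk1.
  set (n := (N0 - Z.succ k)%Z). replace (N0 - k)%Z with (n + 1)%Z in IH by (unfold n; lia).
  destruct (IH ltac:(lia)) as [E1 E2], (H n ltac:(unfold n; lia)) as [Ex Ey].
  assert (F1 : d1 n = 0) by (rewrite Ex, E1, E2; ring).
  split; [exact F1|].
  apply (Cmult_nonzero_cancel (ca U n)); [apply (HS n)|].
  transitivity (d2 (n + 1)%Z); [rewrite Ey, F1; ring | exact E2].
Qed.

(* Adding the unit entering at N0 turns the time-summed wave emitted from N0 into a
   stationary solution on [-N0, N0]. *)
Lemma source_right_stationary :
  stationary_on (fun n => wsum1 N0 n + (if Z.eq_dec n N0 then 1 else 0)) (wsum2 N0).
Proof.
  intros n Hn. assert (HpN : (-N0 <= N0 <= N0)%Z) by lia. split.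
  - rewrite (wsum1_step N0 HpN n Hn), wave1_init.
    destruct (Z.eq_dec (n + 1) N0) as [E|E].
    + destruct (coef_outside (n + 1) ltac:(lia)) as (-> & -> & _).
      do 2 (destruct Z.eq_dec; try lia). ring.
    + do 2 (destruct Z.eq_dec; try lia). ring.
  - rewrite (wsum2_step N0 HpN n Hn), wave2_init.
    do 2 (destruct Z.eq_dec; try lia). ring.
Qed.

Lemma source_left_stationary :
  stationary_on (wsum1 (- N0)) (fun n => wsum2 (- N0) n + (if Z.eq_dec n (- N0) then 1 else 0)).
Proof.
  intros n Hn. assert (HpN : (-N0 <= - N0 <= N0)%Z) by lia. split.
  - rewrite (wsum1_step (- N0) HpN n Hn), wave1_init.
    do 2 (destruct Z.eq_dec; try lia). ring.
  - rewrite (wsum2_step (- N0) HpN n Hn), wave2_init.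
    destruct (Z.eq_dec n (- N0)) as [E|E].
    + destruct (coef_outside n ltac:(lia)) as (-> & _ & _).
      do 2 (destruct Z.eq_dec; try lia). ring.
    + do 2 (destruct Z.eq_dec; try lia). ring.
Qed.

(* First column of the scattering matrix: compare the solution emitted from N0
   with Psi_out^-, which agree at -N0 up to the factor wsum1 N0 (-N0). *)
Lemma scattering_column1 (S : mat2) : is_scattering_matrix U N0 S ->
  S 1%nat 1%nat = wsum1 N0 (- N0) /\ S 2%nat 1%nat = - wsum2 N0 N0.
Proof.
  intros (Pin_p & Pin_m & Pout_p & Pout_m & _ & _ & _ & Hom & _ & Eom & Eip & Eop & Hcol & _).
  assert (HpN : (-N0 <= N0 <= N0)%Z) by lia.
  set (tau := wsum1 N0 (- N0)).
  destruct (stationary_on_zero_up _ _ (stationary_on_sub _ _ _ _ tau source_right_stationary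
              (stationary_on_of_stationary Pout_m Hom))) as [D1 D2].
  - rewrite Eom. cbn [fst snd]. destruct Z.eq_dec; [lia|]. unfold tau. ring.
  - rewrite Eom, (wsum2_left N0 HpN). cbn [fst snd]. ring.
  - pose proof (Hcol N0) as E. rewrite Eip, Eop in E. unfold vadd, vscal in E.
    rewrite (wsum1_right N0 HpN) in D1. destruct Z.eq_dec in D1; [|lia].
    destruct (Pout_m N0) as [u v].
    pose proof (f_equal (@fst C C) E) as E1. pose proof (f_equal (@snd C C) E) as E2.
    cbn [fst snd] in D1, D2, E1, E2.
    apply Csub_eq0 in D1. apply Csub_eq0 in D2.
    assert (Hs11 : S 1%nat 1%nat = tau).
    { transitivity (S 1%nat 1%nat * (tau * u)); [rewrite <- D1; ring|].
      transitivity (tau * (S 1%nat 1%nat * u + S 2%nat 1%nat * 0)); [ring|].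
      rewrite <- E1. ring. }
    split; [exact Hs11|].
    transitivity (- (S 1%nat 1%nat * v) + (S 1%nat 1%nat * v + S 2%nat 1%nat * 1)); [ring|].
    rewrite <- E2, Hs11, D2. ring.
Qed.

(* Second column: compare the solution emitted from -N0 with Psi_out^+ at N0. *)
Lemma scattering_column2 (S : mat2) : is_scattering_matrix U N0 S ->
  S 2%nat 2%nat = wsum2 (- N0) N0 /\ S 1%nat 2%nat = - wsum1 (- N0) (- N0).
Proof.
  intros (Pin_p & Pin_m & Pout_p & Pout_m & _ & _ & Hop & _ & Eim & Eom & _ & Eop & _ & Hcol).
  assert (HpN : (-N0 <= - N0 <= N0)%Z) by lia.
  set (tau := wsum2 (- N0) N0).
  destruct (stationary_on_zero_down _ _ (stationary_on_sub _ _ _ _ tau source_left_stationary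
              (stationary_on_of_stationary Pout_p Hop))) as [D1 D2].
  - rewrite Eop, (wsum1_right (- N0) HpN). cbn [fst snd]. ring.
  - rewrite Eop. cbn [fst snd]. destruct Z.eq_dec; [lia|]. unfold tau. ring.
  - pose proof (Hcol (- N0)%Z) as E. rewrite Eim, Eom in E. unfold vadd, vscal in E.
    destruct (Pout_p (- N0)%Z) as [u v].
    pose proof (f_equal (@fst C C) E) as E1. pose proof (f_equal (@snd C C) E) as E2.
    cbn [fst snd] in D1, D2, E1, E2.
    rewrite (wsum2_left (- N0) HpN) in D2. destruct Z.eq_dec in D2; [|lia].
    apply Csub_eq0 in D1. apply Csub_eq0 in D2.
    assert (Hs22 : S 2%nat 2%nat = tau).
    { transitivity (S 2%nat 2%nat * (tau * v)); [rewrite <- D2; ring|].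
      transitivity (tau * (S 1%nat 2%nat * 0 + S 2%nat 2%nat * v)); [ring|].
      rewrite <- E2. ring. }
    split; [exact Hs22|].
    transitivity ((S 1%nat 2%nat * 1 + S 2%nat 2%nat * u) - S 2%nat 2%nat * u); [ring|].
    rewrite <- E1, Hs22, D1. ring.
Qed.

Lemma scattering_entries (S : mat2) : is_scattering_matrix U N0 S ->
  forall j k : nat, inI2 j -> inI2 k ->
  S j k = RtoC ((-1) ^ (j + k)) *
          (wsum1 ((-1) ^ (Z.of_nat k - 1) * N0) ((-1) ^ Z.of_nat j * N0)
           + wsum2 ((-1) ^ (Z.of_nat k - 1) * N0) ((-1) ^ Z.of_nat j * N0)).
Proof.
  intros Hsc j k Hj Hk.
  destruct (scattering_column1 S Hsc) as [S11 S21].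
  destruct (scattering_column2 S Hsc) as [S22 S12].
  assert (HR : (-N0 <= N0 <= N0)%Z) by lia.
  assert (HL : (-N0 <= - N0 <= N0)%Z) by lia.
  destruct Hj as [->| ->], Hk as [->| ->]; cbn -[wsum1 wsum2 Z.mul RtoC];
    rewrite ?Z.mul_1_l, ?Z.mul_opp_l, ?Z.mul_1_l.
  - rewrite S11, (wsum2_left N0 HR). replace (-1 * (-1 * 1))%R with 1%R by ring. ring.
  - rewrite S12, (wsum2_left (- N0) HL).
    replace (RtoC (-1 * (-1 * (-1 * 1)))) with (- RtoC 1)
      by (rewrite <- RtoC_opp; f_equal; ring). ring.
  - rewrite S21, (wsum1_right N0 HR).
    replace (RtoC (-1 * (-1 * (-1 * 1)))) with (- RtoC 1)
      by (rewrite <- RtoC_opp; f_equal; ring). ring.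
  - rewrite S22, (wsum1_right (- N0) HL).
    replace (-1 * (-1 * (-1 * (-1 * 1))))%R with 1%R by ring. ring.
Qed.

End Region.

Open Scope C_scope.

Theorem mainTheorem1 :
  forall (U : Z -> mat2) (N0 : Z) (S : mat2),
    (forall n : Z, in_S (U n)) ->
    (1 <= N0)%Z ->
    (forall n : Z, (N0 <= Z.abs n)%Z -> is_id2 (U n)) ->
    is_scattering_matrix U N0 S ->
    forall j k : nat, inI2 j -> inI2 k ->
    (* t n is the inner sum for L = n + 1 *)
    exists t : nat -> C,
      (forall n : nat,
         exists l : list (list arc),
           NoDup l /\
           (forall g, In g l <-> (in_G N0 j k g /\ walk_length g = Datatypes.S n)) /\
           t n = Csum (map (Phi U) l)) /\
      ex_series (fun n => Cmod (t n)) /\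
      exists s : C, is_series t s /\
        S j k = RtoC ((-1) ^ (j + k)) * s.
Proof.
  intros U N0 S HS HN0 Hid Hsc j k Hj Hk.
  set (p := ((-1) ^ (Z.of_nat k - 1) * N0)%Z).
  set (q := ((-1) ^ Z.of_nat j * N0)%Z).
  assert (Hp : p = N0 \/ p = (- N0)%Z)
    by (unfold p; destruct Hk as [-> | ->]; cbn -[Z.mul]; lia).
  assert (Hq : q = (- N0)%Z \/ q = N0)
    by (unfold q; destruct Hj as [-> | ->]; cbn -[Z.mul]; lia).
  exists (fun n => wave1 U p (Datatypes.S n) q + wave2 U p (Datatypes.S n) q).
  split; [|split].
  - intros n. exists (walks_between p q (Datatypes.S n)).
    split; [apply walks_between_NoDup|]. split.
    + intros g. rewrite walks_between_spec. reflexivity.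
    + symmetry. apply walks_between_sum.
  - apply (walk_sums_abs_summable U N0); auto; lia.
  - exists (wsum1 U p q + wsum2 U p q). split.
    + apply (walk_sums_series U N0); auto; lia.
    + exact (scattering_entries U N0 HS HN0 Hid S Hsc j k Hj Hk).
Qed.
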